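(* Let $\Sigma,\Gamma$ be finite alphabets, $w \in \Sigma^+$, $h:\Sigma^*\to\Gamma^*$ an injective morphism, and suppose $h(w) = x^r$ with $x \in \Gamma^+$ of minimal length and $r \in \mathbb{Q}$. If $a\in\Sigma$ satisfies $|h(a)| \ge |x|$ and $ava$ and $aua$ are factors of $w$ for some words $u, v \in (\Sigma\setminus\{a\})^*$, then $u = v$.
   Context: For a nonempty word $x$ and rational $r$ with $r|x|$ a nonnegative integer, $x^r$ denotes the prefix of length $r|x|$ of the infinite word $xxx\cdots$. *)

From mathcomp Require Import all_boot all_order all_algebra.
Set Implicit Arguments. Unset Strict Implicit. Unset Printing Implicit Defensive.
Import GRing.Theory Num.Theory.

Definition word_morph (S G : Type) (h : S -> seq G) (s : seq S) : seq G :=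
  flatten (map h s).

(* xpow x n = prefix of length n of the infinite word x x x ... (x nonempty) *)
Definition xpow (G : Type) (x : seq G) (n : nat) : seq G :=
  take n (flatten (nseq n x)).

(* y = x^r : x nonempty, r |x| is a nonnegative integer equal to |y|,
   and y is the prefix of length r|x| of x x x ... *)
Definition is_ratpow (G : Type) (y x : seq G) (r : rat) : Prop :=
  x <> [::] /\ (0 <= r)%R /\ (r * (size x)%:R = (size y)%:R)%R /\ y = xpow x (size y).

(* Let p = |x| and view h(w) as a factor of the p-periodic word x x x ...
   Since x is a shortest root, two occurrences of a factor of length >= p
   start at positions congruent mod p: otherwise their offset d would be a
   period of x x x ..., and so would gcd(d, p) < p, producing a shorter root.
   Applied to the two occurrences of h(a) in h(ava), this shows that p
   divides |h(av)|, so h(av) = c^k with c the prefix of length p of h(a);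
   likewise h(au) = c^l.  Hence h(avau) = h(auav), injectivity gives
   avau = auav, and as a occurs in neither u nor v, u = v. *)
From mathcomp Require Import all_boot all_order all_algebra.
From mathcomp Require Import zify.
Import GRing.Theory Num.Theory.

Set Implicit Arguments.
Unset Strict Implicit.
Unset Printing Implicit Defensive.

Definition periodic (T : Type) (f : nat -> T) (d : nat) :=
  forall n, f (n + d) = f n.

Section Periodic.

Variables (T : Type) (f : nat -> T).

Lemma periodicM d k : periodic f d -> periodic f (k * d).
Proof.
by move=> fd; elim: k => [|k IHk] n; rewrite ?addn0 // mulSn addnA IHk fd.
Qed.

Lemma periodic_mod d e : periodic f d -> periodic f e -> periodic f (d %% e).
Proof.
move=> fd fe n; rewrite -(periodicM (d %/ e) fe) -addnA [_ %% _ + _]addnC.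
by rewrite -divn_eq fd.
Qed.

Lemma periodic_gcd d e : periodic f d -> periodic f e -> periodic f (gcdn d e).
Proof.
elim/ltn_ind: e d => e IHe d fd fe.
have [->|e_gt0] := posnP e; first by rewrite gcdn0.
rewrite gcdnC -gcdn_modr; apply: IHe => //; first exact: ltn_pmod.
exact: periodic_mod.
Qed.

Lemma periodic_shift p i j : 0 < p -> periodic f p -> i <= j ->
  (forall t, t < p -> f (i + t) = f (j + t)) -> periodic f (j - i).
Proof.
move=> p_gt0 fp le_ij agree.
have {}agree t : f (i + t) = f (j + t).
  rewrite (divn_eq t p) [_ * p + _]addnC !addnA !periodicM //.
  by rewrite agree // ltn_pmod.
move=> n; rewrite -(periodicM i fp (n + _)) -(periodicM i fp n).
have -> : n + (j - i) + i * p = j + (n + i * p - i) by nia.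
by rewrite -agree; congr f; nia.
Qed.

End Periodic.

Lemma nth_flatten_nseq (T : Type) (x0 : T) (x : seq T) m i :
  i < m * size x -> nth x0 (flatten (nseq m x)) i = nth x0 x (i %% size x).
Proof.
elim: m i => [|m IHm] i //=; rewrite mulSn nth_cat => lt_i.
case: ltnP => [lt_ix|le_xi]; first by rewrite modn_small.
rewrite IHm; last by rewrite ltn_subLR.
by rewrite -[in RHS](subnK le_xi) modnDr.
Qed.

Lemma size_flatten_nseq (T : Type) (x : seq T) n :
  size (flatten (nseq n x)) = n * size x.
Proof. by rewrite size_flatten /shape map_nseq sumn_nseq mulnC. Qed.

Lemma size_xpow (T : Type) (x : seq T) n : 0 < size x -> size (xpow x n) = n.
Proof. by move=> x_gt0; rewrite size_takel // size_flatten_nseq leq_pmulr. Qed.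

Lemma nth_xpow (T : Type) (x0 : T) (x : seq T) n i : 0 < size x -> i < n ->
  nth x0 (xpow x n) i = nth x0 x (i %% size x).
Proof.
move=> x_gt0 lt_in; rewrite nth_take // nth_flatten_nseq //.
by rewrite (leq_trans lt_in) // leq_pmulr.
Qed.

Lemma xpow_nthP (T : Type) (x0 : T) (x y : seq T) : 0 < size x ->
  (forall i, i < size y -> nth x0 y i = nth x0 x (i %% size x)) ->
  y = xpow x (size y).
Proof.
move=> x_gt0 yx; apply: (@eq_from_nth _ x0); first by rewrite size_xpow.
by move=> i lt_iy; rewrite yx // nth_xpow.
Qed.

Lemma xpow_mul (T : Type) (x : seq T) k :
  0 < size x -> xpow x (k * size x) = flatten (nseq k x).
Proof.
move=> x_gt0; rewrite /xpow -[X in nseq X](subnKC (leq_pmulr k x_gt0)).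
by rewrite nseqD flatten_cat take_size_cat // size_flatten_nseq.
Qed.

Lemma is_ratpow_xpow (T : Type) (y x : seq T) : 0 < size x ->
  y = xpow x (size y) -> is_ratpow y x ((size y)%:R / (size x)%:R).
Proof.
move=> x_gt0 yx; split; first by case: x x_gt0 {yx}.
by rewrite divr_ge0 ?ler0n // divfK // pnatr_eq0 -lt0n.
Qed.

Lemma nth_cat_mid (T : Type) (x0 : T) (s1 s s2 : seq T) i :
  i < size s -> nth x0 (s1 ++ s ++ s2) (size s1 + i) = nth x0 s i.
Proof.
by move=> lt_is; rewrite nth_cat ltnNge leq_addr addKn nth_cat lt_is.
Qed.

Section ShortestRoot.

Variables (T : Type) (Y x : seq T).
Hypotheses (x_gt0 : 0 < size x) (Y_root : Y = xpow x (size Y)).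
Hypothesis x_min :
  forall t, 0 < size t -> Y = xpow t (size Y) -> size x <= size t.

Lemma size_root_dvd_period x0 d :
  periodic (fun n => nth x0 x (n %% size x)) d -> size x %| d.
Proof.
move=> fd; set p := size x; set g := gcdn d p.
have fp : periodic (fun n => nth x0 x (n %% p)) p by move=> n; rewrite modnDr.
have fg := periodic_gcd fd fp.
have g_gt0 : 0 < g by rewrite gcdn_gt0 x_gt0 orbT.
have le_gp : g <= p by rewrite dvdn_leq ?dvdn_gcdr.
have size_t : size (take g x) = g by rewrite size_takel.
have Y_root_t : Y = xpow (take g x) (size Y).
  apply: (xpow_nthP (x0 := x0)); first by rewrite size_t.
  rewrite size_t => i lt_iY; rewrite Y_root nth_xpow // nth_take ?ltn_pmod //.
  rewrite {1}(divn_eq i g) addnC (periodicM _ fg).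
  by rewrite modn_small // (leq_trans (ltn_pmod i g_gt0)).
have le_pg : p <= g by rewrite -size_t x_min ?size_t.
by rewrite -[p](@anti_leq g p) ?le_gp ?dvdn_gcdl.
Qed.

Lemma nth_factor x0 Y1 z Y2 i : Y = Y1 ++ z ++ Y2 -> i < size z ->
  nth x0 z i = nth x0 x ((size Y1 + i) %% size x).
Proof.
move=> EY lt_iz; rewrite -(nth_cat_mid x0 Y1 Y2 lt_iz) -EY {1}Y_root.
rewrite nth_xpow //.
by rewrite EY !size_cat ltn_add2l ltn_addr.
Qed.

Lemma occurrences_congr Y1 Y2 Z1 Z2 y :
  Y = Y1 ++ y ++ Y2 -> Y = Z1 ++ y ++ Z2 -> size x <= size y ->
  size Y1 = size Z1 %[mod size x].
Proof.
wlog le_YZ : Y1 Y2 Z1 Z2 / size Y1 <= size Z1.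
  move=> W EY EZ long_y; have [le|/ltnW le] := leqP (size Y1) (size Z1).
    exact: W le EY EZ long_y.
  by symmetry; apply: W le EZ EY long_y.
move=> EY EZ long_y; have [x0 _] : exists x0 : T, True.
  by case: x x_gt0 => [|x0 ?] //; exists x0.
pose f n := nth x0 x (n %% size x).
have fp : periodic f (size x) by move=> n; rewrite /f modnDr.
have agree t : t < size x -> f (size Y1 + t) = f (size Z1 + t).
  move=> lt_tx; have lt_ty := leq_trans lt_tx long_y.
  by rewrite /f -(nth_factor _ EY lt_ty) -(nth_factor _ EZ lt_ty).
apply/eqP; rewrite eq_sym eqn_mod_dvd //.
exact/size_root_dvd_period/(periodic_shift x_gt0 fp).
Qed.

Lemma factor_xpow Y1 z Y2 : Y = Y1 ++ z ++ Y2 -> size x <= size z ->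
  z = xpow (take (size x) z) (size z).
Proof.
move=> EY long_z; have [x0 _] : exists x0 : T, True.
  by case: x x_gt0 => [|x0 ?] //; exists x0.
have size_t : size (take (size x) z) = size x by rewrite size_takel.
apply: (xpow_nthP (x0 := x0)); rewrite size_t // => i lt_iz.
rewrite nth_take ?ltn_pmod // !(nth_factor _ EY) ?(leq_trans (ltn_pmod _ _)) //.
by rewrite modnDmr.
Qed.

Lemma bordered_factor_power Y1 y z Y2 :
  Y = Y1 ++ y ++ z ++ y ++ Y2 -> size x <= size y ->
  exists k, y ++ z = flatten (nseq k (take (size x) y)).
Proof.
move=> EY long_y.
have EYl : Y = Y1 ++ (y ++ z) ++ y ++ Y2 by rewrite EY -catA.
have EYr : Y = (Y1 ++ y ++ z) ++ y ++ Y2 by rewrite EY -!catA.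
have /dvdnP[k size_yz] : size x %| size (y ++ z).
  have /eqP := occurrences_congr EYr EY long_y.
  by rewrite eqn_mod_dvd !size_cat ?leq_addr // addKn.
have size_c : size (take (size x) y) = size x by rewrite size_takel.
exists k; rewrite {1}(factor_xpow EYl); last first.
  by rewrite size_cat (leq_trans long_y (leq_addr _ _)).
by rewrite takel_cat // size_yz -[in k * _]size_c xpow_mul ?size_c.
Qed.

End ShortestRoot.

Lemma word_morph_cat (S G : Type) (h : S -> seq G) (s1 s2 : seq S) :
  word_morph h (s1 ++ s2) = word_morph h s1 ++ word_morph h s2.
Proof. by rewrite /word_morph map_cat flatten_cat. Qed.

Lemma notin_cat_cons_inj (T : eqType) (a : T) (s1 s2 t1 t2 : seq T) :
  a \notin s1 -> a \notin s2 -> s1 ++ a :: t1 = s2 ++ a :: t2 -> s1 = s2.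
Proof.
move=> a_s1 a_s2 /(congr1 (fun s => take (index a s) s)).
by rewrite !index_cat (negbTE a_s1) (negbTE a_s2) /= eqxx !addn0 !take_size_cat.
Qed.

Theorem lemma6 (S G : finType) (w : seq S) (h : S -> seq G) (x : seq G) (r : rat)
  (a : S) (u v : seq S) :
  w <> [::] ->
  injective (word_morph h) ->
  is_ratpow (word_morph h w) x r ->
  (forall (x' : seq G) (r' : rat), is_ratpow (word_morph h w) x' r' -> size x <= size x') ->
  size x <= size (h a) ->
  a \notin u -> a \notin v ->
  infix (a :: v ++ [:: a]) w ->
  infix (a :: u ++ [:: a]) w ->
  u = v.
Proof.
move=> _ inj_h [x_neq_nil [_ [_ Y_root]]] x_min long_ha a_u a_v occ_v occ_u.
have x_gt0 : 0 < size x by rewrite lt0n size_eq0; exact/eqP.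
have x_shortest t : 0 < size t ->
    word_morph h w = xpow t (size (word_morph h w)) -> size x <= size t.
  by move=> t_gt0 /(is_ratpow_xpow t_gt0); apply: x_min.
have power s : infix (a :: s ++ [:: a]) w ->
    exists k, word_morph h (a :: s) = flatten (nseq k (take (size x) (h a))).
  case/infixP=> w1 [w2 Ew].
  apply: (bordered_factor_power x_gt0 Y_root x_shortest (Y1 := word_morph h w1)
    (z := word_morph h s) (Y2 := word_morph h w2) _ long_ha).
  by rewrite Ew -cat_cons !word_morph_cat /word_morph /= cats0 -!catA.
have [[kv Ev] [ku Eu]] := (power v occ_v, power u occ_u).
have : word_morph h (a :: v ++ a :: u) = word_morph h (a :: u ++ a :: v).
  by rewrite -!cat_cons !word_morph_cat Ev Eu -!flatten_cat -!nseqD addnC.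
by move/inj_h => [/(notin_cat_cons_inj a_v a_u)].
Qed.
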